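(* For every bracket pattern $w$, $A(A(w))=A(w)$. In particular $\langle\!\langle A(w)\rangle\!\rangle=\langle\!\langle w\rangle\!\rangle$.
   Context: $\mathbb N=\{1,2,\dots\}$, $\mathbb N_0=\mathbb N\cup\{0\}$. A bracket pattern is a non-empty finite subset $w\subseteq\mathbb N$; $\|w\|:=\max(w)$. For bracket patterns $w,w'$: superposition $w\cup w'$; for $j\in w$ the projection $\cap_j w:=\{i\in w\mid i\le j\}$; the dual $w^\dagger:=\{\|w\|-i\mid i\in\mathbb N_0,\ i<\|w\|,\ i\notin w\}$. A bracket pattern category is a set of bracket patterns closed under superposition, duals and projections; $\langle\!\langle w\rangle\!\rangle$ denotes the smallest bracket pattern category containing $w$. The completion of a bracket pattern $w$ is $A(w):=\{j-i\mid j\in w,\ i\in\mathbb N_0,\ i\notin w,\ i<j\}$ (itself a bracket pattern). *)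

From HB Require Import structures.
From mathcomp Require Import all_boot finmap.

Set Implicit Arguments.
Unset Strict Implicit.
Unset Printing Implicit Defensive.

Local Open Scope fset_scope.

Definition is_bracket_pattern (w : {fset nat}) : bool :=
  (w != fset0) && (0%N \notin w).

Definition bp_norm (w : {fset nat}) : nat := \max_(i <- w) i.

(* superposition w ∪ w' is fsetU; projection ∩_j w for j ∈ w *)
Definition bp_proj (j : nat) (w : {fset nat}) : {fset nat} :=
  [fset i in w | (i <= j)%N].

Definition bp_dual (w : {fset nat}) : {fset nat} :=
  [fset (bp_norm w - i)%N | i in [seq i <- iota 0 (bp_norm w) | i \notin w]].

Definition completion (w : {fset nat}) : {fset nat} :=
  [fset (j - i)%N | j in w,
     i in [seq i <- iota 0 (bp_norm w) | (i \notin w) && (i < j)%N]].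

Definition is_bp_category (C : {fset nat} -> Prop) : Prop :=
  [/\ (forall w, C w -> is_bracket_pattern w),
      (forall w w', C w -> C w' -> C (w `|` w')),
      (forall w, C w -> C (bp_dual w)) &
      (forall w j, C w -> j \in w -> C (bp_proj j w))].

Definition generated_category (w : {fset nat}) : {fset nat} -> Prop :=
  fun v => forall C, is_bp_category C -> C w -> C v.

(** The completion of [w] is the union, over [j \in w], of the duals of the
    projections [bp_proj j w], since [bp_dual (bp_proj j w)] is exactly
    [{j - i | i \notin w, i < j}]. Conversely [w] is recovered from [A(w)] as
    the union over [j \in w] of [bp_dual (bp_proj j A(w))]: if [j - i] were
    not in [w] for some [0 < i < j] with [i \notin A(w)], then
    [i = j - (j - i)] would lie in [A(w)]. Both unions are built from
    projections, duals and superpositions, so a bracket pattern category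
    contains [w] iff it contains [A(w)]. Idempotence is the computation
    [(b - a) - i = b - (a + i)], where [a + i \notin w] because otherwise
    [i \in A(w)]. *)

From HB Require Import structures.
From mathcomp Require Import all_boot finmap.
From mathcomp Require Import zify.

Set Implicit Arguments.
Unset Strict Implicit.
Unset Printing Implicit Defensive.

Local Open Scope fset_scope.

Lemma fset_neq0_seq (T : choiceType) (A : {fset T}) : A != fset0 -> (A : seq T) != [::].
Proof. by rewrite -cardfs_eq0 -size_eq0. Qed.

Lemma leq_bp_norm (w : {fset nat}) j : j \in w -> j <= bp_norm w.
Proof. by move=> jw; rewrite /bp_norm leq_bigmax_seq. Qed.

Lemma bp_norm_proj (w : {fset nat}) j : j \in w -> bp_norm (bp_proj j w) = j.
Proof.
move=> jw; apply/eqP; rewrite eqn_leq; apply/andP; split.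
  by apply/bigmax_leqP_seq => i; rewrite !inE => /andP[_ ->].
by apply: leq_bp_norm; rewrite !inE jw leqnn.
Qed.

Lemma in_bp_proj (w : {fset nat}) j x : (x \in bp_proj j w) = (x \in w) && (x <= j).
Proof. by rewrite !inE. Qed.

Lemma completionP (w : {fset nat}) x :
  reflect (exists j i, [/\ j \in w, i \notin w, i < j & x = j - i])
          (x \in completion w).
Proof.
apply: (iffP idP) => [/imfset2P[j jw [i]]|[j [i [jw iw ij ->]]]].
  by rewrite /= mem_filter => /andP[/andP[iw ij] _] ->; exists j, i.
apply/imfset2P; exists j => //; exists i => //.
by rewrite /= mem_filter iw ij mem_iota add0n (leq_trans ij (leq_bp_norm jw)).
Qed.

Lemma bp_dualP (w : {fset nat}) x :
  reflect (exists i, [/\ i \notin w, i < bp_norm w & x = bp_norm w - i])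
          (x \in bp_dual w).
Proof.
apply: (iffP idP) => [/imfsetP[i]|[i [iw ilt ->]]].
  by rewrite /= mem_filter mem_iota add0n => /andP[iw /andP[_ ilt]] ->; exists i.
by apply/imfsetP; exists i => //; rewrite /= mem_filter iw mem_iota add0n.
Qed.

Lemma zero_notin_completion (w : {fset nat}) : 0 \notin completion w.
Proof. by apply/completionP => -[j [i [_ _ ij]]]; lia. Qed.

Lemma fsubset_completion (w : {fset nat}) : 0 \notin w -> w `<=` completion w.
Proof.
move=> w0; apply/fsubsetP => x xw; apply/completionP; exists x, 0.
by split; rewrite ?subn0 // lt0n; apply: contraNneq w0 => <-.
Qed.

Lemma completionK (w : {fset nat}) : completion (completion w) = completion w.
Proof.
apply/eqP; rewrite eqEfsubset fsubset_completion ?zero_notin_completion // andbT.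
apply/fsubsetP => x /completionP[j [i [/completionP[b [a [bw aw ab ->]]] iA ij ->]]].
have [->|i_gt0] := posnP i; first by rewrite subn0; apply/completionP; exists b, a.
have aiw : (a + i)%N \notin w.
  apply: contra iA => aiw; apply/completionP; exists (a + i)%N, a; split => //; lia.
by apply/completionP; exists b, (a + i)%N; split => //; lia.
Qed.

Lemma completion_bigcup_dual_proj (w : {fset nat}) :
  completion w = \bigcup_(j <- w) bp_dual (bp_proj j w).
Proof.
apply/fsetP => x; apply/completionP/bigfcupP => [[j [i [jw iw ij ->]]]|[j jw]].
  exists j; first by rewrite jw.
  by apply/bp_dualP; exists i; rewrite bp_norm_proj // in_bp_proj (negbTE iw).
rewrite andbT in jw; case/bp_dualP; rewrite bp_norm_proj // => i [iw ij ->].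
by exists j, i; split => //; move: iw; rewrite in_bp_proj ltnW ?andbT.
Qed.

Lemma bigcup_dual_proj_completion (w : {fset nat}) : 0 \notin w ->
  w = \bigcup_(j <- w) bp_dual (bp_proj j (completion w)).
Proof.
move=> w0; have wA := fsubsetP (fsubset_completion w0).
apply/fsetP => x; apply/idP/bigfcupP => [xw|[j jw]].
  exists x; first by rewrite xw.
  apply/bp_dualP; exists 0; rewrite bp_norm_proj ?wA // subn0.
  by rewrite in_bp_proj (negbTE (zero_notin_completion w)) lt0n; split => //; apply: contraNneq w0 => <-.
rewrite andbT in jw; case/bp_dualP; rewrite bp_norm_proj ?wA // => i [iA ij ->].
have [->|i_gt0] := posnP i; first by rewrite subn0.
apply: contraR iA => jiw; rewrite in_bp_proj (ltnW ij) andbT; apply/completionP.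
by exists j, (j - i); split => //; lia.
Qed.

Section BracketPatternCategory.

Variable C : {fset nat} -> Prop.
Hypothesis catC : is_bp_category C.

Lemma bp_category_bigcup (I : eqType) (r : seq I) (F : I -> {fset nat}) :
  r != [::] -> (forall j, j \in r -> C (F j)) -> C (\bigcup_(j <- r) F j).
Proof.
case: catC => _ CU _ _; elim: r => // j [|k r] IH _ CF.
  by rewrite big_seq1; apply: CF; rewrite mem_seq1.
rewrite big_cons; apply: CU; first by apply: CF; rewrite mem_head.
by apply: IH => // i ir; apply: CF; rewrite inE ir orbT.
Qed.

Lemma bp_category_dual_proj (w : {fset nat}) j :
  C w -> j \in w -> C (bp_dual (bp_proj j w)).
Proof. by case: catC => _ _ CD CP Cw jw; apply/CD/CP. Qed.

Lemma bp_category_completion (w : {fset nat}) : C w -> C (completion w).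
Proof.
move=> Cw; rewrite completion_bigcup_dual_proj.
have [Cb _ _ _] := catC; have /andP[w_neq0 _] := Cb _ Cw.
by apply: bp_category_bigcup => [|j]; [exact: fset_neq0_seq | exact: bp_category_dual_proj].
Qed.

Lemma bp_category_of_completion (w : {fset nat}) :
  is_bracket_pattern w -> C (completion w) -> C w.
Proof.
case/andP=> w_neq0 w0 CA; rewrite (bigcup_dual_proj_completion w0).
apply: bp_category_bigcup => [|j jw]; first exact: fset_neq0_seq.
by apply: bp_category_dual_proj => //; apply: (fsubsetP (fsubset_completion w0)).
Qed.

End BracketPatternCategory.

Theorem lemma7p12 (w : {fset nat}) :
  is_bracket_pattern w ->
  completion (completion w) = completion w /\
  (forall v : {fset nat},
      generated_category (completion w) v <-> generated_category w v).
Proof.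
move=> bw; split; first exact: completionK.
move=> v; split=> genv C catC Cw; apply: genv => //.
  exact: bp_category_completion.
exact: bp_category_of_completion.
Qed.
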